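(* If a space $X$ is $\mathbb Q$-selective, then $X$ is $Y$-selective for every countable metrizable space $Y$.
   Context: All spaces are assumed $T_1$. $\mathbb Q$ is the space of rationals with the usual topology. For spaces $Y$, $X$, a map $\varphi:Y\to\mathcal P(X)\setminus\{\emptyset\}$ is lower semicontinuous (l.s.c.) if $\{y:\varphi(y)\cap U\neq\emptyset\}$ is open in $Y$ for every open $U\subseteq X$; a selection is a map $f:Y\to X$ with $f(y)\in\varphi(y)$ for all $y$. $X$ is $Y$-selective if every l.s.c. map from $Y$ to the nonempty closed subsets of $X$ has a continuous selection. *)

From HB Require Import structures.
From mathcomp Require Import all_boot all_order all_algebra.
From mathcomp Require Import all_classical all_reals all_analysis.
From mathcomp Require Import Rstruct Rstruct_topology.
Import Order.TTheory GRing.Theory Num.Theory.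
Import numFieldTopology.Exports.

Set Implicit Arguments.
Unset Strict Implicit.
Unset Printing Implicit Defensive.

Local Open Scope classical_set_scope.
Local Open Scope ring_scope.

(* The space of rationals with its usual (order = metric) topology. *)
Definition Qspace : topologicalType := (rat^o : topologicalType).

Definition metrizable (Y : topologicalType) : Prop :=
  exists d : Y -> Y -> Rdefinitions.R,
    (forall x y, 0 <= d x y) /\
    (forall x y, d x y = 0 <-> x = y) /\
    (forall x y, d x y = d y x) /\
    (forall x y z, d x z <= d x y + d y z) /\
    (forall U : set Y, open U <->
       (forall x, U x -> exists e : Rdefinitions.R,
           0 < e /\ [set y | d x y < e] `<=` U)).

Definition lsc (Y X : topologicalType) (phi : Y -> set X) : Prop :=
  forall U : set X, open U -> open [set y | phi y `&` U !=set0].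

Definition selective (Y X : topologicalType) : Prop :=
  forall phi : Y -> set X,
    (forall y, phi y !=set0 /\ closed (phi y)) ->
    lsc phi ->
    exists f : Y -> X, continuous f /\ (forall y, phi y (f y)).

(* A nonempty countable metrizable space Y is a retract of Q, and selectivity
   passes to retracts: if s : Y -> Q and p : Q -> Y are continuous with
   p (s y) = y, then phi \o p is l.s.c. on Q whenever phi is l.s.c. on Y, and
   g \o s selects phi whenever g selects phi \o p.

   To retract Q onto Y, enumerate Y and choose around each point c radii
   r_j in ]2^-(j+1), 2^-j[ that are not distances from c, so that the annuli
   r_(j+1) < d(c, _) < r_j are clopen.  Splitting Y into the annuli around
   its point of least index, and each annulus again in the same way, gives a
   tree of clopen cells indexed by finite sequences, in which every point is
   the centre of the deepest cell containing it.  This tree is mirrored in Q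
   by nested intervals with irrational, hence clopen, endpoints; the n-th
   level is shrunk to miss the n-th rational, so every rational has a deepest
   interval among those with nonempty cells.  Then s maps a point to the base
   point of the interval of its deepest cell, and p maps a rational to the
   centre of the cell of its deepest interval. *)

From mathcomp Require Import all_boot all_order all_algebra lra zify.
From mathcomp Require Import all_classical all_reals all_analysis.
From mathcomp Require Import Rstruct.
Import Order.TTheory GRing.Theory Num.Theory numFieldNormedType.Exports.
Local Open Scope classical_set_scope.
Local Open Scope ring_scope.

Set Implicit Arguments.
Unset Strict Implicit.
Unset Printing Implicit Defensive.


Lemma selective_retract (X Y Z : topologicalType) (s : Y -> Z) (p : Z -> Y) :
  continuous s -> continuous p -> cancel s p -> selective Z X -> selective Y X.
Proof.
move=> s_cont p_cont sK selZ phi phi_closed phi_lsc.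
have phip_lsc : lsc (phi \o p).
  by move=> U oU; exact: (continuousP _).1 p_cont _ (phi_lsc U oU).
have [g [g_cont gP]] := selZ _ (fun z => phi_closed (p z)) phip_lsc.
exists (g \o s); split; first by move=> y; exact: continuous_comp (s_cont y) (g_cont (s y)).
by move=> y; have := gP (s y); rewrite /= sK.
Qed.

Section MaximalBranch.
Variable P : seq nat -> Prop.
Hypothesis P_behead : forall j t, P (j :: t) -> P t.
Hypothesis P_uniq : forall i j t, P (i :: t) -> P (j :: t) -> i = j.

Lemma branch_drop s k : P s -> P (drop k s).
Proof. by elim: s k => [|j t IH] [|k] //= /P_behead; exact: IH. Qed.

Lemma branch_eq s s' : P s -> P s' -> size s = size s' -> s = s'.
Proof.
elim: s s' => [|j t IH] [|j' t'] //= Ps Ps' [st].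
by have tt' := IH t' (P_behead Ps) (P_behead Ps') st; subst t'; rewrite (P_uniq Ps Ps').
Qed.

Lemma branch_suffix s s' : P s -> P s' -> (size s <= size s')%N ->
  s = drop (size s' - size s) s'.
Proof.
move=> Ps Ps' le; apply: branch_eq Ps (branch_drop _ Ps') _.
by rewrite size_drop subKn.
Qed.

Lemma branch_extend s f k : P s -> f = drop k s -> f <> s -> exists i, P (i :: f).
Proof.
move=> Ps ef ne; set m := (size s - size f)%N.
have fE : drop m s = f.
  have [le|/ltnW lt] := leqP k (size s); first by rewrite /m ef size_drop subKn.
  by rewrite /m ef (drop_oversize lt) /= subn0 drop_size.
have m0 : (0 < m)%N.
  by rewrite lt0n; apply: contra_notN ne => /eqP m0; rewrite -fE m0 drop0.
exists (nth 0%N s m.-1); rewrite -fE -{2}(prednK m0) -drop_nth; first exact: branch_drop.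
by move: m0; rewrite /m; lia.
Qed.

Definition maximal s := P s /\ forall i, ~ P (i :: s).

Lemma maximal_suffix s f : P s -> maximal f -> exists k, s = drop k f.
Proof.
move=> Ps [Pf maxf]; have [le|lt] := leqP (size s) (size f).
  by exists (size f - size s)%N; exact: branch_suffix.
have fE := branch_suffix Pf Ps (ltnW lt).
have [|i Pi] := branch_extend Ps fE; last by case: (maxf i).
by move=> fs; move: lt; rewrite -fs ltnn.
Qed.

Lemma maximal_uniq f f' : maximal f -> maximal f' -> f = f'.
Proof.
move=> mf mf'; have [k fE] := maximal_suffix mf.1 mf'.
have [[|k'] f'E] := maximal_suffix mf'.1 mf; first by rewrite f'E drop0.
case: f fE f'E {mf} => [|j t] fE f'E; first by rewrite f'E.
by have := congr1 size fE; rewrite f'E /= !size_drop; lia.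
Qed.

Lemma maximal_exists N : P [::] -> (forall s, P s -> (size s <= N)%N) ->
  exists f, maximal f.
Proof.
move=> P0 Pbound; pose sized n := `[< exists2 s, P s & size s = n >].
have ex : exists n, sized n by exists 0%N; apply/asboolP; exists [::].
have ub n : sized n -> (n <= N)%N by move=> /asboolP [s Ps <-]; exact: Pbound.
case: (ex_maxnP ex ub) => _ /asboolP [f Pf <-] fmax; exists f; split=> // i Pi.
have /fmax : sized (size f).+1 by apply/asboolP; exists (i :: f).
by rewrite ltnn.
Qed.

End MaximalBranch.

Lemma exists_itvoo_notin_countable (R : realType) (A : set R) (a b : R) :
  countable A -> a < b -> exists2 r, a < r < b & ~ A r.
Proof.
move=> cA ab; apply: contrapT => /forall2NP noR.
have sub : `]a, b[%classic `<=` A.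
  by move=> r /=; rewrite in_itv /= => rab; case: (noR r) => // /contrapT.
have mA : measurable A by apply: countable_measurable => // t; exact: measurable_set1.
have : (lebesgue_measure (`]a, b[%classic : set R) <= lebesgue_measure A)%E.
  by apply: le_measure; rewrite ?inE //; exact: measurable_itv.
rewrite (countable_lebesgue_measure0 cA) lebesgue_measure_itv /= lte_fin ab.
by rewrite lee_fin subr_le0 leNgt ab.
Qed.

Lemma exists_lt_exp2 (F : archiRealFieldType) (x : F) : exists n : nat, x < 2 ^+ n.
Proof.
have [x0|x0] := leP x 0; first by exists 0%N; rewrite expr0 (le_lt_trans x0).
exists (Num.bound x); apply: (lt_trans (archi_boundP (ltW x0))).
by rewrite -natrX ltr_nat ltn_expl.
Qed.

Lemma sqrn_neq_double_sqrn (n d : nat) : (0 < d)%N -> n * n != 2 * (d * d).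
Proof.
move=> d0; apply/negP => /eqP nd.
have n0 : (0 < n)%N by rewrite lt0n; apply: contraTneq d0 => n0; move: nd; rewrite n0; lia.
have := congr1 (logn 2) nd; rewrite !lognM ?muln_gt0 ?n0 ?d0 // (logn_prime 2 (isT : prime 2)).
by rewrite eqxx; lia.
Qed.

Lemma rat_sqr_neq2 (r : rat) : r ^+ 2 != 2.
Proof.
apply/eqP => r2.
have nd : numq r ^+ 2 = 2 * denq r ^+ 2.
  apply: (@intr_inj rat); rewrite rmorphXn rmorphM rmorphXn /= numqE exprMn r2.
  by rewrite [2%:~R]/=.
have := @sqrn_neq_double_sqrn `|numq r| `|denq r|; rewrite absz_gt0 denq_neq0.
move=> /(_ isT) /eqP; apply; apply/eqP; rewrite -eqz_nat !PoszM !abszE.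
by rewrite -!normrM -!expr2 nd normrM.
Qed.

Lemma rat_sqr_neq_double_sqr (x y : rat) : y != 0 -> x ^+ 2 != 2 * y ^+ 2.
Proof.
move=> y0; apply: contra (rat_sqr_neq2 (x / y)) => /eqP xy.
by rewrite expr_div_n xy mulfK // expf_neq0.
Qed.

Lemma continuous_sqr_sub (R : realFieldType) (b : R) :
  continuous (fun x : R => (x - b) ^+ 2).
Proof.
move=> x; have xb : (fun y : R => y - b) @ x --> x - b.
  by apply: cvgB; [exact: cvg_id | exact: cvg_cst].
exact: (cvgM xb xb).
Qed.

Lemma open_sqr_sub_gt (R : realFieldType) (a b : R) : open [set x : R | a < (x - b) ^+ 2].
Proof. have := (continuousP _).1 (@continuous_sqr_sub R b) _ (@open_gt R a). exact. Qed.

Lemma open_sqr_sub_lt (R : realFieldType) (a b : R) : open [set x : R | (x - b) ^+ 2 < a].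
Proof. have := (continuousP _).1 (@continuous_sqr_sub R b) _ (@open_lt R a). exact. Qed.

Definition qenum (n : nat) : rat := odflt 0 (unpickle n).

Lemma qenum_pickle q : qenum (pickle q) = q.
Proof. by rewrite /qenum pickleK. Qed.

(* Capping the scale of [j :: t] by half its distance to [qenum (size t)]
   keeps that rational out of all the children of [j :: t], so every rational
   lies in nodes of bounded depth. *)
Fixpoint node (s : seq nat) : rat * rat :=
  if s is j :: t then
    let b := (node t).1 + (node t).2 / 2 ^+ j in
    let e := (node t).2 / 2 ^+ j / 4 in
    let q := qenum (size t) in
    (b, if q == b then e else Num.min e (`|q - b| / 2))
  else (0, 1).

Definition base s := (node s).1.
Definition scale s := (node s).2.
Definition step t j := scale t / 2 ^+ j.

Lemma base_cons j t : base (j :: t) = base t + step t j.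
Proof. by []. Qed.

Lemma scale_gt0 s : 0 < scale s.
Proof.
elim: s => [|j t IH]; rewrite /scale //=.
have e0 : 0 < (node t).2 / 2 ^+ j / 4 by rewrite !divr_gt0 // exprn_gt0.
case: eqP => [//|ne]; rewrite lt_min e0 divr_gt0 // normr_gt0 subr_eq0.
exact/eqP.
Qed.

Lemma step_gt0 t j : 0 < step t j.
Proof. by rewrite divr_gt0 ?scale_gt0 ?exprn_gt0. Qed.

Lemma stepS t j : step t j.+1 = step t j / 2.
Proof. by rewrite /step exprSr invfM mulrA. Qed.

Lemma step_le t i k : (i <= k)%N -> step t k <= step t i.
Proof.
move=> ik; rewrite /step ler_pM2l ?scale_gt0 // lef_pV2 ?posrE ?exprn_gt0 //.
by rewrite ler_eXn2l // ltr1n.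
Qed.

Lemma step_le_scale t j : step t j <= scale t.
Proof. by have := step_le t (leq0n j); rewrite /step expr0 divr1. Qed.

Lemma exists_step_lt t (e : rat) : 0 < e -> exists J, step t J < e.
Proof.
move=> e0; have [n en] := exists_lt_exp2 (scale t / e).
by exists n; rewrite /step ltr_pdivrMr ?exprn_gt0 // mulrC -ltr_pdivrMr.
Qed.

Lemma scale_cons_le j t : scale (j :: t) <= step t j / 4.
Proof. by rewrite /scale /=; case: eqP => _ //; rewrite ge_min lexx. Qed.

Lemma scale_cons_le_dist j t : qenum (size t) != base (j :: t) ->
  scale (j :: t) <= `|qenum (size t) - base (j :: t)| / 2.
Proof. by rewrite /scale /= => /negbTE ->; rewrite ge_min lexx orbT. Qed.

(* The interval ]base t + sqrt 2 * step t j.+1, base t + sqrt 2 * step t j[,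
   which is clopen in Q. *)
Definition slot t j : set rat := [set q | base t < q /\
  2 * step t j.+1 ^+ 2 < (q - base t) ^+ 2 /\ (q - base t) ^+ 2 < 2 * step t j ^+ 2].

Lemma slot_base_cons j t : slot t j (base (j :: t)).
Proof.
rewrite /slot base_cons stepS; have := step_gt0 t j.
move: (step t j) (base t) => v b v0.
by split; [lra | split; nra].
Qed.

Lemma slot_cons i j t q : slot (j :: t) i q -> slot t j q.
Proof.
rewrite /slot base_cons (stepS t j) => -[qb [_ qi]].
have v0 := step_gt0 t j; have w0 := step_gt0 (j :: t) i.
have wv : step (j :: t) i <= step t j / 4.
  exact: le_trans (step_le_scale _ _) (scale_cons_le _ _).
move: qb qi wv v0 w0; move: (step t j) (step (j :: t) i) (base t) => v w b qb qi wv v0 w0.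
have xv : q - (b + v) < v / 2 by nra.
by split; [lra | split; nra].
Qed.

Lemma slot_uniq t i j q : slot t i q -> slot t j q -> i = j.
Proof.
wlog ij : i j / (i <= j)%N => [wlog_ij qi qj|].
  by have [/wlog_ij|/ltnW/wlog_ij] := leqP i j; [apply | move=> /(_ qj qi)].
move=> [_ [qi _]] [_ [_ qj]]; apply/eqP; rewrite eqn_leq ij /= leqNgt.
apply/negP => /(step_le t) ji; have := step_gt0 t j.
move: qi qj ji; move: (step t j) (step t i.+1) => v w; nra.
Qed.

Lemma slot_dist t j q : slot t j q -> `|q - base t| < 2 * step t j.
Proof.
move=> [qb [_ qj]]; rewrite gtr0_norm ?subr_gt0 //; have := step_gt0 t j.
move: qb qj; move: (step t j) (base t) => v b; nra.
Qed.

Lemma slot_index_gt t J i q : `|q - base t| < step t J.+1 -> slot t i q -> (J < i)%N.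
Proof.
move=> qJ [qb [qi _]]; rewrite ltnNge; apply/negP => iJ.
have {iJ} := step_le t (iJ : (i.+1 <= J.+1)%N).
move: qJ; rewrite gtr0_norm ?subr_gt0 // => qJ; have := step_gt0 t i.+1.
move: qb qi qJ; move: (step t J.+1) (step t i.+1) (base t) => v w b; nra.
Qed.

Lemma slot_far t J i q :
  2 * step t J ^+ 2 < (q - base t) ^+ 2 -> (J <= i)%N -> ~ slot t i q.
Proof.
move=> qJ /(step_le t) iJ [_ [_ qi]]; have := step_gt0 t i.
move: qJ qi iJ; move: (step t J) (step t i) (q - base t) => v w x; nra.
Qed.

Lemma slot_cons_neq_qenum i j t q : slot (j :: t) i q -> q != qenum (size t).
Proof.
move=> [qb [_ qi]]; apply/eqP => qE.
have /scale_cons_le_dist : qenum (size t) != base (j :: t) by rewrite -qE gt_eqF.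
rewrite -qE gtr0_norm ?subr_gt0 // => sq.
have := le_trans (step_le_scale (j :: t) i) sq; have := step_gt0 (j :: t) i.
move: qb qi; move: (step (j :: t) i) (base (j :: t)) => w b; nra.
Qed.

Lemma open_slot t j : open (slot t j : set rat^o).
Proof.
apply: openI; first exact: open_gt.
by apply: openI; [exact: open_sqr_sub_gt | exact: open_sqr_sub_lt].
Qed.

Lemma closed_slot t j : closed (slot t j : set rat^o).
Proof.
have slotC : ~` slot t j = [set q | q < base t] `|`
    ([set q | (q - base t) ^+ 2 < 2 * step t j.+1 ^+ 2] `|`
     [set q | 2 * step t j ^+ 2 < (q - base t) ^+ 2]).
  apply/seteqP; split=> q /=; last by case=> [qb | [qw | qv]] [bq [wq qv']]; lra.
  move=> qNslot; have [qb|bq] := ltP q (base t); [by left | right].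
  have [qw|wq] := ltP ((q - base t) ^+ 2) (2 * step t j.+1 ^+ 2); [by left | right].
  have /negPf qw := rat_sqr_neq_double_sqr (q - base t) (lt0r_neq0 (step_gt0 t j.+1)).
  have /negPf qv := rat_sqr_neq_double_sqr (q - base t) (lt0r_neq0 (step_gt0 t j)).
  rewrite ltNge le_eqVlt qv /=; apply/negP => qv'.
  apply: qNslot; split; last by split=> //; rewrite lt_def qw wq.
  rewrite lt_neqAle bq andbT; apply: contraTneq wq => <-.
  by rewrite subrr expr0n /= -ltNge mulr_gt0 // exprn_gt0 // step_gt0.
rewrite -openC slotC; apply: openU; first exact: open_lt.
by apply: openU; [exact: open_sqr_sub_lt | exact: open_sqr_sub_gt].
Qed.

Definition in_node s q := if s is j :: t then slot t j q else True.

Lemma in_node_drop s k q : in_node s q -> in_node (drop k s) q.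
Proof.
elim: s k => [|j t IH] [|k] //= sq; apply: IH.
by case: t sq => [//|i t] /= /slot_cons.
Qed.

Lemma in_node_base s : in_node s (base s).
Proof. by case: s => [//|j t]; exact: slot_base_cons. Qed.

Section QBranch.
Variable live : seq nat -> Prop.

Fixpoint qbranch s q :=
  if s is j :: t then [/\ qbranch t q, slot t j q & live (j :: t)] else True.

Lemma qbranch_behead j t q : qbranch (j :: t) q -> qbranch t q.
Proof. by case. Qed.

Lemma qbranch_uniq i j t q : qbranch (i :: t) q -> qbranch (j :: t) q -> i = j.
Proof. by move=> [_ qi _] [_ qj _]; exact: slot_uniq qi qj. Qed.

Lemma qbranch_size s q : qbranch s q -> (size s <= (pickle q).+1)%N.
Proof.
elim: s => [//|i t IH] qit; have := IH (qbranch_behead qit).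
rewrite /= leq_eqVlt => /orP [/eqP tq|//].
case: t qit tq {IH} => [//|j t] [_ qi _] /= [tq].
by have := slot_cons_neq_qenum qi; rewrite tq qenum_pickle eqxx.
Qed.

Lemma qbranch_in_node s q :
  in_node s q -> (forall k, live (drop k s)) -> qbranch s q.
Proof.
elim: s => [//|j t IH] sq sl; split; [|exact: sq|exact: sl 0%N].
apply: IH => [|k]; last exact: sl k.+1.
by have := in_node_drop 1 sq; rewrite /= drop0.
Qed.

Lemma qbranch_near s q : qbranch s q -> \forall x \near (q : rat^o), qbranch s x.
Proof.
elim: s => [|j t IH] /=; first by move=> _; exact: filterT.
move=> [tq jq jl]; have jnear : nbhs (q : rat^o) (slot t j).
  by apply: open_nbhs_nbhs; split; [exact: open_slot | exact: jq].
by apply: filterS2 (IH tq) jnear => x.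
Qed.

Definition Qaddress q := maximal (qbranch^~ q).

Lemma Qaddress_exists q : exists f, Qaddress q f.
Proof. exact: (maximal_exists (N := (pickle q).+1)) (@qbranch_size^~ q). Qed.

Lemma Qaddress_uniq q f f' : Qaddress q f -> Qaddress q f' -> f = f'.
Proof.
exact: (@maximal_uniq (qbranch^~ q)
  (fun j t => @qbranch_behead j t q) (fun i j t => @qbranch_uniq i j t q)).
Qed.

Lemma Qaddress_extends q s f : qbranch s q -> Qaddress q f ->
  f = s \/ exists i, qbranch (i :: s) q.
Proof.
move=> sq qf; have [k sE] := maximal_suffix (fun j t => @qbranch_behead j t q)
  (fun i j t => @qbranch_uniq i j t q) sq qf.
have [->|sf] := eqVneq s f; [by left | right].
by apply: (branch_extend (fun j t => @qbranch_behead j t q) qf.1 sE); exact/eqP.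
Qed.

Lemma Qaddress_locally_constant q f : q != base f -> Qaddress q f ->
  \forall x \near (q : rat^o), Qaddress x f.
Proof.
move=> qb [fq fmax].
(* Away from [base f] only the slots [i < J] of [f] come close to [q], and [q]
   lies in none of the live ones. *)
have [J fJ] : exists J, 2 * step f J ^+ 2 < (q - base f) ^+ 2.
  have qb0 : 0 < `|q - base f| / 2 by rewrite divr_gt0 // normr_gt0 subr_eq0.
  have [J fJ] := exists_step_lt f qb0; exists J; have := step_gt0 f J.
  rewrite -(real_normK (num_real (q - base f))).
  by move: fJ; move: (step f J) `|q - base f| => v y; nra.
have qfar : \forall x \near (q : rat^o), 2 * step f J ^+ 2 < (x - base f) ^+ 2.
  by apply: open_nbhs_nbhs; split; [exact: open_sqr_sub_gt | exact: fJ].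
have qNslot : \forall x \near (q : rat^o),
    forall i : 'I_J, live (val i :: f) -> ~ slot f i x.
  apply: (@filter_forall _ _ (fun (i : 'I_J) (x : rat^o) =>
    live (val i :: f) -> ~ slot f i x) (nbhs (q : rat^o)) _) => i.
  have [il|il] := pselect (live (val i :: f)); last first.
    by apply: nearW => x /il.
  have qi : ~ slot f i q by move=> qi; apply: (fmax i); split.
  have qNi : nbhs (q : rat^o) (~` slot f i).
    by apply: open_nbhs_nbhs; split; [rewrite openC; exact: closed_slot | exact: qi].
  by apply: filterS qNi => x xi _.
apply: filterS3 (qbranch_near fq) qfar qNslot => x xf xfar xNslot.
split=> // i [_ xi il]; have [iJ|Ji] := ltnP i J; first exact: (xNslot (Ordinal iJ)).
exact: slot_far xfar Ji xi.
Qed.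

End QBranch.

Notation R := Rdefinitions.R.

Lemma exists_sphere_free_radii (Y : Type) (d : Y -> Y -> R) :
  countable [set: Y] -> exists rad : Y -> nat -> R,
  [/\ forall c j, (2 ^+ j.+1)^-1 < rad c j, forall c j, rad c j < (2 ^+ j)^-1
    & forall c j z, d c z <> rad c j].
Proof.
move=> cY; have /choice [rad radP] : forall cj : Y * nat, exists r : R,
    (2 ^+ cj.2.+1)^-1 < r < (2 ^+ cj.2)^-1 /\ ~ range (d cj.1) r.
  move=> [c j] /=; have cd : countable (range (d c)).
    exact: card_le_trans (card_image_le _ _) cY.
  have ab : (2 ^+ j.+1)^-1 < (2 ^+ j)^-1 :> R.
    by rewrite ltf_pV2 ?posrE ?exprn_gt0 // ltr_eXn2l // ltr1n.
  by have [r ? ?] := exists_itvoo_notin_countable cd ab; exists r.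
exists (fun c j => rad (c, j)); split=> [c j|c j|c j z dr].
- by case: (radP (c, j)) => /andP [].
- by case: (radP (c, j)) => /andP [].
- by case: (radP (c, j)) => _; apply; exists z.
Qed.

Section CountableMetric.
Variable Y : topologicalType.
Variable d : Y -> Y -> R.
Hypothesis d_ge0 : forall x y, 0 <= d x y.
Hypothesis d_eq0 : forall x y, d x y = 0 <-> x = y.
Hypothesis d_sym : forall x y, d x y = d y x.
Hypothesis d_tri : forall x y z, d x z <= d x y + d y z.
Hypothesis d_open : forall U : set Y, open U <->
  (forall x, U x -> exists e : R, 0 < e /\ [set y | d x y < e] `<=` U).
Variable rad : Y -> nat -> R.
Hypothesis rad_lb : forall c j, (2 ^+ j.+1)^-1 < rad c j.
Hypothesis rad_ub : forall c j, rad c j < (2 ^+ j)^-1.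
Hypothesis rad_sphere_free : forall c j z, d c z <> rad c j.

Lemma rad_gt0 c j : 0 < rad c j.
Proof. by apply: lt_trans (rad_lb c j); rewrite invr_gt0 exprn_gt0. Qed.

Lemma rad_lt c j k : (j < k)%N -> rad c k < rad c j.
Proof.
move=> jk; apply: lt_trans (rad_ub c k) (le_lt_trans _ (rad_lb c j)).
by rewrite lef_pV2 ?posrE ?exprn_gt0 // ler_eXn2l // ltr1n.
Qed.

Lemma rad_le c j k : (j <= k)%N -> rad c k <= rad c j.
Proof. by rewrite leq_eqVlt => /orP [/eqP ->//|/(rad_lt c) /ltW]. Qed.

Lemma exists_rad_lt c (e : R) : 0 < e -> exists J, rad c J < e.
Proof.
move=> e0; have [n en] := exists_lt_exp2 e^-1; exists n.
by apply: lt_trans (rad_ub c n) _; rewrite -[e]invrK ltf_pV2 ?posrE ?invr_gt0 ?exprn_gt0.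
Qed.

Lemma open_dist_lt c r : open [set z | d c z < r].
Proof.
apply/d_open => x /= cx; exists (r - d c x); split; first by rewrite subr_gt0.
by move=> y /= xy; have := d_tri c x y; lra.
Qed.

Lemma open_dist_gt c r : open [set z | r < d c z].
Proof.
apply/d_open => x /= cx; exists (d c x - r); split; first by rewrite subr_gt0.
by move=> y /= xy; have := d_tri c y x; rewrite (d_sym y x); lra.
Qed.

Definition annulus c j :=
  [set z | rad c j.+1 < d c z /\ (j = 0%N \/ d c z < rad c j)].

Lemma open_annulus c j : open (annulus c j).
Proof.
case: j => [|j].
  rewrite (_ : annulus c 0 = [set z | rad c 1 < d c z]); first exact: open_dist_gt.
  by apply/seteqP; split=> z /=; [case | split=> //; left].
rewrite (_ : annulus c j.+1 = [set z | rad c j.+2 < d c z] `&` [set z | d c z < rad c j.+1]).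
  by apply: openI; [exact: open_dist_gt | exact: open_dist_lt].
apply/seteqP; split=> z /= [zj zj']; last by split=> //; right.
by case: zj' => // ?; split.
Qed.

Lemma annulus_index_ge c j J z : d c z < rad c J -> annulus c j z -> (J <= j)%N.
Proof.
move=> zJ [zj _]; rewrite leqNgt; apply/negP => /(rad_le c) jJ.
by have := lt_trans zJ (le_lt_trans jJ zj); rewrite ltxx.
Qed.

Lemma annulus_uniq c i j z : annulus c i z -> annulus c j z -> i = j.
Proof.
wlog ij : i j / (i <= j)%N => [wlog_ij zi zj|].
  by have [/wlog_ij|/ltnW/wlog_ij] := leqP i j; [apply | move=> /(_ zj zi)].
move=> zi [_ [j0 | zj]]; first by move: ij; rewrite j0 leqn0 => /eqP.
by apply/eqP; rewrite eqn_leq ij (annulus_index_ge zj zi).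
Qed.

Lemma annulus_dist_lt c j z : (0 < j)%N -> annulus c j z -> d c z < rad c j.
Proof. by case: j => [//|j] _ [_ [//|]]. Qed.

Lemma annulus_neq c j z : annulus c j z -> z <> c.
Proof.
move=> [cz _] zc; move: cz; rewrite zc (d_eq0 c c).2 //.
by rewrite ltNge (ltW (rad_gt0 _ _)).
Qed.

Lemma annulus_cover c z : z <> c -> exists j, annulus c j z.
Proof.
move=> zc; have dz0 : 0 < d c z.
  by rewrite lt_neqAle d_ge0 andbT; apply/eqP => /esym /d_eq0 cz; exact: zc.
have [J zJ] := exists_rad_lt c dz0.
have ex : exists j, rad c j.+1 < d c z by exists J; apply: lt_trans zJ; exact: rad_lt.
case: (ex_minnP ex) => j zj jmin; exists j; split=> //.
case: j zj jmin => [|j] zj jmin; [by left | right].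
have : ~~ (rad c j.+1 < d c z) by apply/negP => /jmin; rewrite ltnn.
by rewrite -leNgt le_eqVlt => /orP [/eqP /rad_sphere_free|].
Qed.

Variable ix : Y -> nat.
Hypothesis ix_inj : injective ix.
Variable y0 : Y.

Definition center (A : set Y) : Y :=
  xget y0 [set m | A m /\ forall w, A w -> (ix m <= ix w)%N].

Lemma center_spec A z :
  A z -> A (center A) /\ forall w, A w -> (ix (center A) <= ix w)%N.
Proof.
move=> Az; have ex : exists n, `[< exists2 w, A w & ix w = n >].
  by exists (ix z); apply/asboolP; exists z.
case: (ex_minnP ex) => _ /asboolP [m Am <-] mmin.
apply: (xgetPex y0 (P := [set m | A m /\ forall w, A w -> (ix m <= ix w)%N])).
by exists m; split=> // w Aw; apply: mmin; apply/asboolP; exists w.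
Qed.

Fixpoint cell (s : seq nat) : set Y :=
  if s is j :: t then cell t `&` annulus (center (cell t)) j else setT.

Lemma cell_behead j t z : cell (j :: t) z -> cell t z.
Proof. by case. Qed.

Lemma cell_uniq i j t z : cell (i :: t) z -> cell (j :: t) z -> i = j.
Proof. by move=> [_ zi] [_ zj]; exact: annulus_uniq zi zj. Qed.

Lemma cell_drop s k z : cell s z -> cell (drop k s) z.
Proof. exact: (branch_drop (fun j t => @cell_behead j t z)). Qed.

Lemma open_cell s : open (cell s).
Proof.
elim: s => [|j t IH] /=; first exact: openT.
by apply: openI => //; exact: open_annulus.
Qed.

Lemma size_cell s z : cell s z -> (size s <= ix (center (cell s)))%N.
Proof.
elim: s z => [//|j t IH] z zjt.
have [[ct cj] _] := center_spec zjt.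
have [_ ctmin] := center_spec (cell_behead zjt).
have cneq : center (cell (j :: t)) != center (cell t) by apply/eqP; exact: annulus_neq cj.
apply: leq_ltn_trans (IH _ (cell_behead zjt)) _.
by rewrite ltn_neqAle (inj_eq ix_inj) eq_sym cneq ctmin.
Qed.

Lemma size_cell_le_ix s z : cell s z -> (size s <= ix z)%N.
Proof. by move=> zs; apply: leq_trans (size_cell zs) ((center_spec zs).2 z zs). Qed.

Definition Yaddress z := maximal (fun s => cell s z).

Lemma Yaddress_exists z : exists f, Yaddress z f.
Proof. exact: (maximal_exists (N := ix z)) (@size_cell_le_ix^~ z). Qed.

Lemma center_Yaddress z f : Yaddress z f -> center (cell f) = z.
Proof.
move=> [zf fmax]; apply: contrapT => /nesym /annulus_cover [j zj].
by apply: (fmax j); split.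
Qed.

Lemma Yaddress_suffix z s f : cell s z -> Yaddress z f -> exists k, s = drop k f.
Proof.
exact: (@maximal_suffix (fun s => cell s z)
  (fun j t => @cell_behead j t z) (fun i j t => @cell_uniq i j t z)).
Qed.

Lemma near_dist_continuous (T : topologicalType) (g : T -> Y) (t : T) :
  (forall e : R, 0 < e -> \forall x \near t, d (g t) (g x) < e) -> {for t, continuous g}.
Proof.
move=> gd B; rewrite nbhsE => -[B' [oB' B't] B'B].
have [e [e0 eB']] := (d_open B').1 oB' _ B't.
by apply: filterS (gd e e0) => x xe; apply: B'B; exact: eB'.
Qed.

Definition live s := cell s !=set0.

Lemma center_cell s : live s -> cell s (center (cell s)).
Proof. by case=> z /center_spec []. Qed.

Definition Yaddr z := xget [::] (Yaddress z).
Definition Qaddr q := xget [::] (Qaddress live q).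

Lemma Yaddr_spec z : Yaddress z (Yaddr z).
Proof. exact: (xgetPex [::] (Yaddress_exists z)). Qed.

Lemma Qaddr_spec q : Qaddress live q (Qaddr q).
Proof. exact: (xgetPex [::] (Qaddress_exists live q)). Qed.

Definition embed z : rat^o := base (Yaddr z).
Definition retr (q : rat^o) : Y := center (cell (Qaddr q)).

Lemma Qaddress_embed z : Qaddress live (embed z) (Yaddr z).
Proof.
split; last by move=> i [_ [ff _] _]; rewrite ltxx in ff.
apply: qbranch_in_node; first exact: in_node_base.
by move=> k; exists z; apply: cell_drop; exact: (Yaddr_spec z).1.
Qed.

Lemma retr_embed : cancel embed retr.
Proof.
move=> z; rewrite /retr (Qaddress_uniq (Qaddr_spec _) (Qaddress_embed z)).
exact: center_Yaddress (Yaddr_spec z).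
Qed.

Lemma in_node_embed s w : cell s w -> in_node s (embed w).
Proof.
move=> ws; have [k ->] := Yaddress_suffix ws (Yaddr_spec w).
exact/in_node_drop/in_node_base.
Qed.

Lemma retr_cell s q : qbranch live s q -> cell s (retr q).
Proof.
move=> sq; have [k ->] := maximal_suffix (fun j t => @qbranch_behead live j t q)
  (fun i j t => @qbranch_uniq live i j t q) sq (Qaddr_spec q).
apply: cell_drop; rewrite /retr; case: (Qaddr q) (Qaddr_spec q).1 => [|j t] //=.
by case=> _ _; exact: center_cell.
Qed.

Lemma embed_continuous : continuous embed.
Proof.
move=> z A /nbhs_ballP [e /= e0 eA]; set f := Yaddr z.
have fz : center (cell f) = z := center_Yaddress (Yaddr_spec z).
have [J fJ] := exists_step_lt f (divr_gt0 e0 (ltr0Sn _ 1)).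
have zU : open_nbhs z (cell f `&` [set w | d z w < rad z J]).
  split; first by apply: openI; [exact: open_cell | exact: open_dist_lt].
  by split; [exact: (Yaddr_spec z).1 | rewrite /= (d_eq0 z z).2 // rad_gt0].
apply: filterS (open_nbhs_nbhs zU) => w [wf wJ].
have [->|wz] := pselect (w = z); first exact/eA/ballxx.
have [j wj] := annulus_cover wz.
have /slot_dist wd : in_node (j :: f) (embed w) by apply: in_node_embed; rewrite /= fz.
apply: eA; rewrite /ball /= distrC.
have := step_le f (annulus_index_ge wJ wj); move: wd fJ; rewrite /embed -/f; lra.
Qed.

Lemma retr_near q e : 0 < e -> \forall x \near (q : rat^o), d (retr q) (retr x) < e.
Proof.
move=> e0; set f := Qaddr q; have retr_eq x : Qaddr x = f -> d (retr q) (retr x) < e.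
  by move=> xf; rewrite /retr xf (d_eq0 _ _).2.
have [qb|qb] := eqVneq q (base f); last first.
  apply: filterS (Qaddress_locally_constant qb (Qaddr_spec q)) => x xf.
  exact/retr_eq/(Qaddress_uniq (Qaddr_spec x) xf).
(* Near [base f], a point either keeps the address [f] or enters a slot [i]
   of [f] with [J < i], whose cell lies in the [i]-th annulus around [retr q]. *)
have [J qJ] := exists_rad_lt (retr q) e0.
have qball := nbhsx_ballx (q : rat^o) _ (step_gt0 f J.+1).
apply: filterS2 qball (qbranch_near (Qaddr_spec q).1) => x xq xf.
have [/retr_eq //|[i xi]] := Qaddress_extends xf (Qaddr_spec x).
have Ji : (J < i)%N by case: xi => _ xi _; apply: (slot_index_gt _ xi); rewrite -qb distrC.
have [_ /(annulus_dist_lt (leq_ltn_trans (leq0n J) Ji)) xr] := retr_cell xi.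
by apply: lt_le_trans xr (le_trans (rad_le _ (ltnW Ji)) (ltW qJ)).
Qed.

Lemma retr_continuous : continuous retr.
Proof. by move=> q; apply: near_dist_continuous => e; exact: retr_near. Qed.

Lemma rat_retract : exists (s : Y -> rat^o) (p : rat^o -> Y),
  [/\ continuous s, continuous p & cancel s p].
Proof.
exists embed, retr.
by split; [exact: embed_continuous | exact: retr_continuous | exact: retr_embed].
Qed.

End CountableMetric.

Lemma selective_of_empty (Y X : topologicalType) : (Y -> False) -> selective Y X.
Proof.
move=> Y0 phi _ _; exists (fun y => False_rect X (Y0 y)).
by split=> y; case: (Y0 y).
Qed.

Theorem mainTheorem19 (X : topologicalType) :
  accessible_space X ->
  selective Qspace X ->
  forall Y : topologicalType,
    accessible_space Y ->
    countable [set: Y] ->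
    metrizable Y ->
    selective Y X.
Proof.
move=> _ selQ Y _ cY [d [d_ge0 [d_eq0 [d_sym [d_tri d_open]]]]].
have [[y0 _]|Y0] := pselect (exists y : Y, True); last first.
  by apply: selective_of_empty => y; apply: Y0; exists y.
have [ix ix_inj] : exists ix : Y -> nat, injective ix.
  by have /countable_injP [ix ix_inj] := cY; exists ix => a b; apply: ix_inj; rewrite ?inE.
have [rad [rad_lb rad_ub rad_sphere_free]] := exists_sphere_free_radii d cY.
have [s [p [s_cont p_cont sK]]] := rat_retract d_ge0 d_eq0 d_sym d_tri d_open
  rad_lb rad_ub rad_sphere_free ix_inj y0.
exact: selective_retract s_cont p_cont sK selQ.
Qed.
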